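(* Let $N\ge1$, let $\tilde\chi$ be a Dirichlet character modulo $N$ with associated character $\chi$ on $\Gamma_0^{(2)}(N)$, let $f\in S_2^k(\Gamma_0^{(2)}(N),\chi)$, and let $s$ be a symmetric positive definite $2\times2$ integral matrix with $l'=\det(s)$. Then for every $d\in(\mathbb{Z}/l'N\mathbb{Z})^\times$, \[\langle d\rangle\,\phi_s^*(f)=\chi(dI_2)\,\phi_s^*(f).\]
   Context: $\Gamma_0^{(2)}(N)=\{\begin{pmatrix}A&B\\C&D\end{pmatrix}\in \mathrm{Sp}_4(\mathbb{Z}) : C\equiv 0 \pmod N\}$. For $M=\begin{pmatrix}A&B\\C&D\end{pmatrix}$, $F|_kM(Z)=\det(CZ+D)^{-k}F((AZ+B)(CZ+D)^{-1})$ on the Siegel upper half space $\mathbb{H}_2$ of genus 2. The character is $\chi(M)=\tilde\chi(\det D)$, and more generally for an integral $2\times2$ matrix $D$ one writes $\chi(D)=\tilde\chi(\det D)$ (so $\chi(dI_2)=\tilde\chi(d^2)$, with $d$ reduced modulo $N$). $S_2^k(\Gamma_0^{(2)}(N),\chi)$ is the space of Siegel cusp forms $f$ of degree 2, weight $k$ with $f|_kM=\chi(M)f$ for all $M\in\Gamma_0^{(2)}(N)$. The restriction $\phi_s^*(f)(\tau)=f(s\tau)$ ($\tau$ in the upper half plane) is an elliptic cusp form of weight $2k$ on $\Gamma_1(Nl')$. For $g$ of weight $2k$ on $\Gamma_1(Nl')$ and $d\in(\mathbb{Z}/l'N\mathbb{Z})^\times$, the diamond operator is $\langle d\rangle g=g|_{2k}\alpha$,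 $(g|_{2k}\alpha)(\tau)=(c\tau+\delta)^{-2k}g(\alpha\tau)$, for any $\alpha=\begin{pmatrix}a&b\\c&\delta\end{pmatrix}\in\Gamma_0(Nl')$ with $\delta\equiv d\pmod{Nl'}$. *)

From HB Require Import structures.
From mathcomp Require Import all_boot all_order all_algebra.
From mathcomp Require Import reals.
From mathcomp Require Import complex.
Set Implicit Arguments. Unset Strict Implicit. Unset Printing Implicit Defensive.
Import Order.TTheory GRing.Theory Num.Theory.
Local Open Scope ring_scope.

Definition intmx (T : pzRingType) m n (M : 'M[int]_(m, n)) : 'M[T]_(m, n) :=
  map_mx (fun z : int => z%:~R) M.

Definition Jmx : 'M[int]_(2 + 2) := block_mx 0 1%:M (- 1%:M) 0.

Definition is_Sp4 (M : 'M[int]_(2 + 2)) : Prop := M^T *m Jmx *m M = Jmx.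

Definition blkA (M : 'M[int]_(2 + 2)) : 'M[int]_2 := ulsubmx M.
Definition blkB (M : 'M[int]_(2 + 2)) : 'M[int]_2 := ursubmx M.
Definition blkC (M : 'M[int]_(2 + 2)) : 'M[int]_2 := dlsubmx M.
Definition blkD (M : 'M[int]_(2 + 2)) : 'M[int]_2 := drsubmx M.

Definition in_Gamma0_2 (N : nat) (M : 'M[int]_(2 + 2)) : Prop :=
  is_Sp4 M /\ forall i j : 'I_2, (N%:Z %| blkC M i j)%Z.

Definition posdef2 (R : realType) (Y : 'M[R]_2) : Prop :=
  Y^T = Y /\ forall x : 'cV[R]_2, x != 0 -> 0 < (x^T *m Y *m x) 0 0.

Definition siegelH (R : realType) (Z : 'M[R[i]]_2) : Prop :=
  Z^T = Z /\ posdef2 (map_mx (@complex.Im R) Z).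

Definition slash2 (R : realType) (k : nat) (M : 'M[int]_(2 + 2))
  (F : 'M[R[i]]_2 -> R[i]) (Z : 'M[R[i]]_2) : R[i] :=
  let A := intmx R[i] (blkA M) in let B := intmx R[i] (blkB M) in
  let C := intmx R[i] (blkC M) in let D := intmx R[i] (blkD M) in
  (\det (C *m Z + D)) ^- k * F ((A *m Z + B) *m invmx (C *m Z + D)).

Definition is_dirichlet_char (R : realType) (N : nat) (chi : int -> R[i]) : Prop :=
  [/\ forall a : int, chi (a + N%:Z) = chi a,
      forall a b : int, chi (a * b) = chi a * chi b,
      chi 1 = 1
    & forall a : int, chi a != 0 <-> coprimez a N%:Z].

Definition symmx (R : realType) (z1 z2 z3 : R[i]) : 'M[R[i]]_2 :=
  \matrix_(i < 2, j < 2)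
    (if i == j then (if (i : nat) == 0%N then z1 else z3) else z2).

(* holomorphy on H_2 (Osgood): continuous and complex differentiable in each of
   the three symmetric coordinates z11, z12, z22 *)
Definition continuous_on_H2 (R : realType) (F : 'M[R[i]]_2 -> R[i]) : Prop :=
  forall Z, siegelH Z -> forall eps : R[i], 0 < eps -> exists2 del : R[i], 0 < del &
    forall W, siegelH W -> (forall i j, `|W i j - Z i j| < del) -> `|F W - F Z| < eps.

Definition cderivable_dir (R : realType) (F : 'M[R[i]]_2 -> R[i]) (Z E : 'M[R[i]]_2) :
  Prop :=
  exists L : R[i], forall eps : R[i], 0 < eps -> exists2 del : R[i], 0 < del &
    forall h : R[i], 0 < `|h| < del -> siegelH (Z + h *: E) ->
      `|(F (Z + h *: E) - F Z) / h - L| < eps.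

Definition holomorphic_H2 (R : realType) (F : 'M[R[i]]_2 -> R[i]) : Prop :=
  continuous_on_H2 F /\
  forall Z, siegelH Z ->
    [/\ cderivable_dir F Z (symmx 1 0 0),
        cderivable_dir F Z (symmx 0 1 0)
      & cderivable_dir F Z (symmx 0 0 1)].

(* cusp condition: Siegel's Phi operator kills F |_k gamma for all gamma in Sp_4(Z) *)
Definition cuspidal2 (R : realType) (k : nat) (F : 'M[R[i]]_2 -> R[i]) : Prop :=
  forall gamma, is_Sp4 gamma -> forall tau : R[i], 0 < complex.Im tau ->
    forall eps : R, 0 < eps -> exists T : R, forall t : R, T < t ->
      `|slash2 k gamma F (symmx tau 0 (Complex 0 t))| < Complex eps 0.

Definition chiM (R : realType) (chi : int -> R[i]) (M : 'M[int]_(2 + 2)) : R[i] :=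
  chi (\det (blkD M)).

Definition siegel_cusp_form (R : realType) (N k : nat) (chi : int -> R[i])
  (F : 'M[R[i]]_2 -> R[i]) : Prop :=
  [/\ holomorphic_H2 F, cuspidal2 k F &
      forall M, in_Gamma0_2 N M -> forall Z, siegelH Z ->
        slash2 k M F Z = chiM chi M * F Z].

Definition phi_s (R : realType) (s : 'M[int]_2) (F : 'M[R[i]]_2 -> R[i])
  (tau : R[i]) : R[i] := F (tau *: intmx R[i] s).

Definition in_Gamma0 (M : int) (al : 'M[int]_2) : Prop :=
  \det al = 1 /\ (M %| al 1%R 0%R)%Z.

Definition slash1 (R : realType) (w : nat) (al : 'M[int]_2) (g : R[i] -> R[i])
  (tau : R[i]) : R[i] :=
  let a := (al 0 0)%:~R in let b := (al 0 1)%:~R in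
  let c := (al 1 0)%:~R in let dl := (al 1 1)%:~R in
  (c * tau + dl) ^- w * g ((a * tau + b) / (c * tau + dl)).

(* An element [[a, b], [c, d]] of Gamma_0(N l') with c = c' l' embeds into
   Gamma_0^(2)(N) as M = [[a I, b s], [c' adj(s), d I]], because
   c' adj(s) s = c' l' I = c I.  This M maps s tau to s (alpha tau), with
   automorphy factor det((c tau + d) I) = (c tau + d)^2, and chi(M) = chi~(d^2).
   The modularity of f under M is therefore exactly the claimed identity. *)
From HB Require Import structures.
From mathcomp Require Import all_boot all_order all_algebra.
From mathcomp Require Import reals.
From mathcomp Require Import complex.
From mathcomp Require Import ring.
Set Implicit Arguments. Unset Strict Implicit. Unset Printing Implicit Defensive.
Import Order.TTheory GRing.Theory Num.Theory.
Local Open Scope ring_scope.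

Lemma det_mx22 (T : comPzRingType) (A : 'M[T]_2) :
  \det A = A 0 0 * A 1 1 - A 0 1 * A 1 0.
Proof.
rewrite (expand_det_row _ 0) !big_ord_recl big_ord0 /cofactor !det_mx11 /=.
rewrite !mxE /= expr0 expr1 mul1r addr0 mulN1r mulrN.
by congr (A _ _ * A _ _ - A _ _ * A _ _); apply/val_inj.
Qed.

Lemma scalar_mxD (T : pzRingType) n (x y : T) : x%:M + y%:M = (x + y)%:M :> 'M_n.
Proof. by rewrite raddfD. Qed.

Lemma trmxZ (T : pzRingType) m n (x : T) (A : 'M[T]_(m, n)) : (x *: A)^T = x *: A^T.
Proof. by apply/matrixP=> i j; rewrite !mxE. Qed.

Lemma eqz_mod_mulr m n d e : (m = n %[mod d * e])%Z -> (m = n %[mod d])%Z.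
Proof.
move/eqP; rewrite eqz_mod_dvd => /(dvdz_trans (dvdz_mulr e (dvdzz d))).
by rewrite -eqz_mod_dvd => /eqP.
Qed.

Lemma eqz_modX k m n d : (m = n %[mod d])%Z -> (m ^+ k = n ^+ k %[mod d])%Z.
Proof. by move=> eq_mn; rewrite -modzXm eq_mn modzXm. Qed.

Section DirichletCharacter.
Variables (R : realType) (N : nat) (chi : int -> R[i]).
Hypothesis chi_dirichlet : is_dirichlet_char N chi.

Lemma dirichlet_char_addMz a z : chi (a + N%:Z * z) = chi a.
Proof.
have [chi_addN _ _ _] := chi_dirichlet.
have chi_addMn a' (n : nat) : chi (a' + N%:Z * n%:Z) = chi a'.
  elim: n => [|n IHn]; first by rewrite mulr0 addr0.
  by rewrite -addn1 PoszD mulrDr mulr1 addrA chi_addN.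
case: z => n; first exact: chi_addMn.
by rewrite -[in LHS](chi_addMn _ n.+1) NegzE mulrN addrNK.
Qed.

Lemma dirichlet_char_eqmodz a b : (a = b %[mod N%:Z])%Z -> chi a = chi b.
Proof.
move/eqP; rewrite eqz_mod_dvd => /dvdzP[z ab_eq].
by rewrite -(subrK b a) ab_eq addrC mulrC dirichlet_char_addMz.
Qed.

End DirichletCharacter.

Section IntegralMatrices.
Variable T : comPzRingType.

Lemma intmxM n (A B : 'M[int]_n) : intmx T (A *m B) = intmx T A *m intmx T B.
Proof. exact: (map_mxM (intr : {rmorphism int -> T})). Qed.

Lemma intmxZ m n x (A : 'M[int]_(m, n)) : intmx T (x *: A) = x%:~R *: intmx T A.
Proof. by apply/matrixP=> i j; rewrite !mxE intrM. Qed.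

Lemma intmx_scalar n x : intmx T (x%:M : 'M_n) = x%:~R%:M.
Proof. exact: (map_scalar_mx (intr : {rmorphism int -> T})). Qed.

End IntegralMatrices.

Lemma posdef2_intmx_sym (R : realType) (s : 'M[int]_2) :
  posdef2 (intmx R s) -> s^T = s.
Proof.
case=> sym _; apply/matrixP=> i j; apply: (@intr_inj R).
by have := congr1 (fun M : 'M[R]_2 => M i j) sym; rewrite !mxE.
Qed.

Lemma Im_mul_intr (R : realType) (z : R[i]) (x : int) :
  complex.Im (z * x%:~R) = complex.Im z * x%:~R.
Proof.
have -> : (x%:~R : R[i]) = ((x%:~R : R)%:C)%C by rewrite (rmorph_int (real_complex R)).
by case: z => a b /=; rewrite mulr0 add0r.
Qed.

Lemma siegelH_scale_intmx (R : realType) (s : 'M[int]_2) (tau : R[i]) :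
  posdef2 (intmx R s) -> 0 < complex.Im tau -> siegelH (tau *: intmx R[i] s).
Proof.
move=> s_posdef Imtau_gt0; have [sym pos] := s_posdef.
split; first by rewrite trmxZ /intmx map_trmx (posdef2_intmx_sym s_posdef).
have -> : map_mx (@complex.Im R) (tau *: intmx R[i] s) = complex.Im tau *: intmx R s.
  by apply/matrixP=> i j; rewrite !mxE Im_mul_intr.
split=> [|x x_neq0]; first by rewrite trmxZ sym.
by rewrite -scalemxAr -scalemxAl mxE mulr_gt0 ?pos.
Qed.

Section Gamma0Embedding.
Variables (s : 'M[int]_2) (a b c dl : int).
Hypothesis s_sym : s^T = s.

Definition Gamma0_embed : 'M[int]_(2 + 2) :=
  block_mx a%:M (b *: s) (c *: \adj s) dl%:M.

Lemma Gamma0_embed_Sp4 : a * dl - b * c * \det s = 1 -> is_Sp4 Gamma0_embed.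
Proof.
move=> det_eq1.
have adj_sym : (\adj s)^T = \adj s by rewrite trmx_adj s_sym.
rewrite /is_Sp4 /Gamma0_embed /Jmx tr_block_mx !mulmx_block.
rewrite !(mulmx0, mul0mx, mulmx1, mul1mx, addr0, add0r, mulmxN, mulNmx).
rewrite !trmxZ !tr_scalar_mx adj_sym s_sym !mul_scalar_mx !mul_mx_scalar addNr.
rewrite -!scalemxAl -!scalemxAr mul_adj_mx addNr !scale_scalar_mx.
rewrite -!raddfN -!raddfD /= mul_mx_adj !scale_scalar_mx scalar_mxD.
by congr block_mx; congr scalar_mx; rewrite -det_eq1; ring.
Qed.

Lemma Gamma0_embed_in_Gamma0_2 (N : nat) :
  a * dl - b * c * \det s = 1 -> (N%:Z %| c)%Z -> in_Gamma0_2 N Gamma0_embed.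
Proof.
move=> det_eq1 N_dvd_c; split; first exact: Gamma0_embed_Sp4.
by move=> i j; rewrite /blkC /Gamma0_embed block_mxKdl mxE dvdz_mulr.
Qed.

Lemma chiM_Gamma0_embed (R : realType) (chi : int -> R[i]) :
  chiM chi Gamma0_embed = chi (dl ^+ 2).
Proof. by rewrite /chiM /blkD /Gamma0_embed block_mxKdr det_scalar. Qed.

Lemma slash2_Gamma0_embed (R : realType) (k : nat) (F : 'M[R[i]]_2 -> R[i])
    (al : 'M[int]_2) (tau : R[i]) :
  al 0 0 = a -> al 0 1 = b -> al 1 0 = c * \det s -> al 1 1 = dl ->
  slash2 k Gamma0_embed F (tau *: intmx R[i] s) = slash1 (2 * k) al (phi_s s F) tau.
Proof.
move=> al00 al01 al10 al11.
rewrite /slash2 /slash1 /phi_s al00 al01 al10 al11 /Gamma0_embed /blkA /blkB /blkC /blkD.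
rewrite block_mxKul block_mxKur block_mxKdl block_mxKdr !intmxZ !intmx_scalar.
set w := (c * \det s)%:~R * tau + dl%:~R.
have CZ_D : c%:~R *: intmx R[i] (\adj s) *m (tau *: intmx R[i] s) + dl%:~R%:M = w%:M.
  rewrite -scalemxAl -scalemxAr -intmxM mul_adj_mx intmx_scalar !scale_scalar_mx.
  by rewrite scalar_mxD /w intrM; congr scalar_mx; ring.
rewrite CZ_D mul_scalar_mx scalerA -scalerDl invmx_scalar mul_mx_scalar scalerA.
by rewrite det_scalar -exprM mulnC [in RHS](mulrC _ w^-1) mulrC.
Qed.

End Gamma0Embedding.

Theorem lemma4p1 (R : realType) (N : nat) (chi : int -> R[i]) (k : nat)
  (f : 'M[R[i]]_2 -> R[i]) (s : 'M[int]_2) :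
  (0 < N)%N ->
  is_dirichlet_char N chi ->
  siegel_cusp_form N k chi f ->
  posdef2 (intmx R s) ->
  forall d : int, coprimez d (N%:Z * \det s) ->
  forall al : 'M[int]_2, in_Gamma0 (N%:Z * \det s) al ->
    (al 1%R 1%R = d %[mod N%:Z * \det s])%Z ->
  forall tau : R[i], 0 < complex.Im tau ->
    slash1 (2 * k) al (phi_s s f) tau = chi (\det (d%:M : 'M[int]_2)) * phi_s s f tau.
Proof.
move=> _ chi_dirichlet [_ _ f_modular] s_posdef d _ al [det_al Nl_dvd_c] al11_eq tau Imtau_gt0.
have [m al10] := dvdzP Nl_dvd_c.
have s_sym := posdef2_intmx_sym s_posdef.
set M := Gamma0_embed s (al 0 0) (al 0 1) (m * N%:Z) (al 1 1).
have al10_eq : al 1 0 = m * N%:Z * \det s by rewrite al10 mulrA.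
have M_Gamma0 : in_Gamma0_2 N M.
  apply: Gamma0_embed_in_Gamma0_2 => //; last exact: dvdz_mull.
  by rewrite -det_al [RHS]det_mx22 al10_eq !mulrA.
have slash_M : slash2 k M f (tau *: intmx R[i] s) = slash1 (2 * k) al (phi_s s f) tau.
  exact: slash2_Gamma0_embed.
have sZ_in_H : siegelH (tau *: intmx R[i] s) by exact: siegelH_scale_intmx.
rewrite -slash_M f_modular // /M chiM_Gamma0_embed det_scalar.
have al11_sq_eq : (al 1%R 1%R ^+ 2 = d ^+ 2 %[mod N%:Z])%Z.
  exact: eqz_modX (eqz_mod_mulr al11_eq).
by rewrite (dirichlet_char_eqmodz chi_dirichlet al11_sq_eq).
Qed.
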